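(* Let $n\ge 1$, $N=2^n$, and let $U$ be an $n$-qubit unitary, specified by a quantum circuit, with $U\ket{0}_n = \ket{\psi}_n = \sum_{j=0}^{N-1}\psi_j\ket{j}_n$ where $\psi_j\in\mathbb{C}$ and $\sum_j|\psi_j|^2=1$. Then one can construct a $(1, n+3, 0)$-block-encoding $U_A$ of the diagonal matrix $A = \mathrm{diag}(\psi_0,\dots,\psi_{N-1})$ with $O(n)$ circuit depth (in single- and two-qubit gates) and a total of $O(1)$ queries to a controlled-$U$ gate.
   Context: Block-encoding: for an $s$-qubit operator $A$, $\alpha,\epsilon\ge 0$ and $a\in\mathbb{N}$, an $(s+a)$-qubit unitary $V$ is an $(\alpha,a,\epsilon)$-block-encoding of $A$ if $\|A - \alpha(\bra{0}^{\otimes a}\otimes I)V(\ket{0}^{\otimes a}\otimes I)\|\le\epsilon$ (operator norm). *)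

From HB Require Import structures.
From mathcomp Require Import all_boot all_order all_algebra.
From mathcomp Require Import algC.
From mathcomp Require Import spectral.
Set Implicit Arguments. Unset Strict Implicit. Unset Printing Implicit Defensive.
Import Order.TTheory GRing.Theory Num.Theory Num.Def.
Local Open Scope ring_scope.

Definition adj {p q} (A : 'M[algC]_(p, q)) : 'M[algC]_(q, p) := (map_mx conjC A)^T.

Definition vnorm {d} (x : 'cV[algC]_d) : algC := sqrtC (\sum_i `|x i 0| ^+ 2).

Definition opnorm_le {p q} (M : 'M[algC]_(p, q)) (eps : algC) : Prop :=
  forall x : 'cV[algC]_q, vnorm (M *m x) <= eps * vnorm x.

(* Computational basis: index i of an m-qubit register, qubit 0 is the most
   significant bit.  [|0>^{a} (x) I_{2^s}] as a 2^(a+s) x 2^s matrix. *)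
Definition ket0_tens_id (a s : nat) : 'M[algC]_(2 ^ (a + s), 2 ^ s) :=
  \matrix_(i, j) ((i : nat) == (j : nat))%:R.

Definition block_encoding (s a : nat) (alpha eps : algC)
    (V : 'M[algC]_(2 ^ (a + s))) (A : 'M[algC]_(2 ^ s)) : Prop :=
  [/\ V \is unitarymx, 0 <= alpha, 0 <= eps &
      opnorm_le (A - alpha *: (adj (ket0_tens_id a s) *m V *m ket0_tens_id a s)) eps].

Arguments block_encoding : clear implicits.

Definition ket0 (n : nat) : 'cV[algC]_(2 ^ n) := \col_i ((i : nat) == 0%N)%:R.
Definition diag_of_state {d} (psi : 'cV[algC]_d) : 'M[algC]_d := diag_mx psi^T.

Definition qbit (m : nat) (q : 'I_m) (i : nat) : bool := odd (i %/ 2 ^ (m - q.+1))%N.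

Definition loc_index (m : nat) (s : seq 'I_m) (i : nat) : nat :=
  foldl (fun acc q => (acc.*2 + qbit q i)%N) 0%N s.

(* entry of a matrix, extended by 0 outside its range *)
Definition ent {p q} (A : 'M[algC]_(p, q)) (i j : nat) : algC :=
  match (insub i : option 'I_p), (insub j : option 'I_q) with
  | Some i', Some j' => A i' j'
  | _, _ => 0
  end.

(* the gate g (given by its entries on the local register s) acting on the
   qubits s of an m-qubit register, identity on the other qubits *)
Definition embed (m : nat) (s : seq 'I_m) (g : nat -> nat -> algC) : 'M[algC]_(2 ^ m) :=
  \matrix_(i, j) if [forall q : 'I_m, (q \notin s) ==> (qbit q i == qbit q j)]
                 then g (loc_index s i) (loc_index s j) else 0.

(* controlled-U (control is the first, most significant, local qubit) *)
Definition ctrl_ent (n : nat) (U : 'M[algC]_(2 ^ n)) (i j : nat) : algC :=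
  if ((i < 2 ^ n) && (j < 2 ^ n))%N then ((i == j)%:R)
  else if ((2 ^ n <= i) && (2 ^ n <= j))%N then ent U (i - 2 ^ n)%N (j - 2 ^ n)%N
  else 0.

(* Gates of an m-qubit circuit with an n-qubit oracle:
   arbitrary single-qubit gates, arbitrary two-qubit gates, and queries to
   controlled-U (control qubit c, targets t 0, ..., t (n-1)). *)
Inductive gate (n m : nat) : Type :=
| Gate1 of 'I_m & 'M[algC]_2
| Gate2 of 'I_m & 'I_m & 'M[algC]_4
| CtrlU of 'I_m & ('I_n -> 'I_m).

Definition gate_support n m (g : gate n m) : seq 'I_m :=
  match g with
  | Gate1 q _ => [:: q]
  | Gate2 q1 q2 _ => [:: q1; q2]
  | CtrlU c t => c :: [seq t k | k <- enum 'I_n]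
  end.

Definition gate_wf n m (g : gate n m) : Prop :=
  match g with
  | Gate1 _ G => G \is unitarymx
  | Gate2 q1 q2 G => q1 != q2 /\ G \is unitarymx
  | CtrlU c t => injective t /\ c \notin codom t
  end.

Definition gate_mx n m (U : 'M[algC]_(2 ^ n)) (g : gate n m) : 'M[algC]_(2 ^ m) :=
  match g with
  | Gate1 q G => embed [:: q] (ent G)
  | Gate2 q1 q2 G => embed [:: q1; q2] (ent G)
  | CtrlU c t => embed (c :: [seq t k | k <- enum 'I_n]) (ctrl_ent U)
  end.

Definition is_query n m (g : gate n m) : bool :=
  if g is CtrlU _ _ then true else false.

(* A circuit is a sequence of layers (time steps); the gates of a layer act on
   pairwise disjoint qubits.  Layers are applied left to right. *)
Definition circuit n m := seq (seq (gate n m)).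

Fixpoint all_prop {T} (P : T -> Prop) (s : seq T) : Prop :=
  if s is x :: s' then P x /\ all_prop P s' else True.

Definition layer_wf n m (L : seq (gate n m)) : Prop :=
  all_prop (@gate_wf n m) L /\ uniq (flatten [seq gate_support g | g <- L]).

Definition circuit_wf n m (C : circuit n m) : Prop := all_prop (@layer_wf n m) C.

Definition layer_mx n m (U : 'M[algC]_(2 ^ n)) (L : seq (gate n m)) : 'M[algC]_(2 ^ m) :=
  foldr (fun g M => gate_mx U g *m M) 1%:M L.

Definition circuit_mx n m (U : 'M[algC]_(2 ^ n)) (C : circuit n m) : 'M[algC]_(2 ^ m) :=
  foldl (fun M L => layer_mx U L *m M) 1%:M C.

Definition depth n m (C : circuit n m) : nat := size C.

Definition num_queries n m (C : circuit n m) : nat :=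
  \sum_(L <- C) count (@is_query n m) L.

(* The circuit acts on qubit 0 (a flag), qubits 1 and 2 (idle), a work register R = qubits
   3 .. n+2 and the system register S = qubits n+3 .. 2n+2.  It flips the flag, applies U to R
   controlled on the flag, XORs S into R with one layer of n CNOTs, and flips the flag back.
   Starting from |0>|0>_R|j'>_S this yields sum_l psi_l |0>|l xor j'>_R|j'>_S, whose component
   with all n+3 ancillas in |0> is psi_j' |0>|0>_R|j'>_S; hence the top-left block of the
   circuit is exactly diag(psi).  X and CNOT act on basis states as permutations, so every
   entry of the circuit reduces to one entry of controlled-U; the depth is 4 and U is queried
   once. *)

From mathcomp Require Import all_boot all_order all_algebra.
From mathcomp Require Import algC.
From mathcomp Require Import spectral.
From mathcomp Require Import zify.
Set Implicit Arguments. Unset Strict Implicit. Unset Printing Implicit Defensive.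
Import Order.TTheory GRing.Theory Num.Theory.
Local Open Scope ring_scope.
(** * Binary expansions *)

Definition nat_of_bits (bs : seq bool) : nat :=
  foldl (fun acc (b : bool) => acc.*2 + b)%N 0%N bs.

Definition bitn (m q i : nat) : bool := odd (i %/ 2 ^ (m - q.+1)).

Definition bits_of_nat (m i : nat) : seq bool := mkseq (bitn m ^~ i) m.

Lemma nat_of_bits_rcons bs b : nat_of_bits (rcons bs b) = ((nat_of_bits bs).*2 + b)%N.
Proof. by rewrite /nat_of_bits foldl_rcons. Qed.

Lemma nat_of_bits_cons b bs : nat_of_bits (b :: bs) = (b * 2 ^ size bs + nat_of_bits bs)%N.
Proof.
elim/last_ind: bs => [|bs c IH]; first by rewrite /= muln1 addn0; case: b.
rewrite -rcons_cons !nat_of_bits_rcons IH size_rcons expnS; lia.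
Qed.

Lemma nat_of_bits_lt bs : (nat_of_bits bs < 2 ^ size bs)%N.
Proof.
elim/last_ind: bs => [//|bs b IH].
rewrite nat_of_bits_rcons size_rcons expnS; case: b; lia.
Qed.

Lemma size_bits_of_nat m i : size (bits_of_nat m i) = m.
Proof. exact: size_mkseq. Qed.

Lemma nth_bits_of_nat m i q : (q < m)%N -> nth false (bits_of_nat m i) q = bitn m q i.
Proof. exact: nth_mkseq. Qed.

Lemma bits_of_natS m i : bits_of_nat m.+1 i = rcons (bits_of_nat m (i %/ 2)) (odd i).
Proof.
rewrite /bits_of_nat mkseqS /bitn subnn divn1; congr rcons.
apply/eq_in_map => q; rewrite mem_iota add0n => q_lt_m.
by rewrite -divnMA -expnS subSS -subSn.
Qed.

Lemma bits_of_natK m i : (i < 2 ^ m)%N -> nat_of_bits (bits_of_nat m i) = i.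
Proof.
elim: m i => [|m IH] i; first by rewrite expn0; case: i.
rewrite expnS => lt_i; rewrite bits_of_natS nat_of_bits_rcons IH; last lia.
by rewrite -muln2 {3}(divn_eq i 2) modn2.
Qed.

Lemma nat_of_bitsK bs : bits_of_nat (size bs) (nat_of_bits bs) = bs.
Proof.
elim/last_ind: bs => [//|bs b IH].
rewrite size_rcons nat_of_bits_rcons bits_of_natS -muln2 divnMDl // divn_small; last by case: b.
by rewrite addn0 IH oddD oddM andbF; case: b.
Qed.

Lemma bitn_nat_of_bits bs q :
  (q < size bs)%N -> bitn (size bs) q (nat_of_bits bs) = nth false bs q.
Proof. by move=> lt_q; rewrite -nth_bits_of_nat // nat_of_bitsK. Qed.

Lemma bitn_inj m i j : (i < 2 ^ m)%N -> (j < 2 ^ m)%N ->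
  (forall q, (q < m)%N -> bitn m q i = bitn m q j) -> i = j.
Proof.
move=> lt_i lt_j eq_bits; rewrite -(bits_of_natK lt_i) -(bits_of_natK lt_j).
by congr nat_of_bits; apply/eq_in_map => q; rewrite mem_iota => /eq_bits.
Qed.

Lemma bitn_addl a m q i : bitn (a + m) (a + q) i = bitn m q i.
Proof. by rewrite /bitn -addnS subnDl. Qed.

Lemma bitn_small m q i : (i < 2 ^ (m - q.+1))%N -> bitn m q i = false.
Proof. by move=> lt_i; rewrite /bitn divn_small. Qed.

(** * Gates acting on a list of qubits *)

Lemma map_nth_index (T : eqType) (U : Type) (x0 : U) (s : seq T) (t : seq U) :
  uniq s -> size t = size s -> [seq nth x0 t (index q s) | q <- s] = t.
Proof.
move=> s_uniq eq_size; apply: (@eq_from_nth _ x0); rewrite size_map // => p lt_p.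
case: s s_uniq eq_size lt_p => [//|y s] s_uniq _ lt_p.
by rewrite (nth_map y) // index_uniq.
Qed.

Section Splice.
Variables (m : nat) (s : seq 'I_m).

Lemma loc_indexE i : loc_index s i = nat_of_bits [seq bitn m q i | q <- map val s].
Proof. by rewrite /loc_index /nat_of_bits; elim: s 0%N => //= q s' IH a; exact: IH. Qed.

Lemma loc_index_lt i : (loc_index s i < 2 ^ size s)%N.
Proof. by rewrite loc_indexE -(size_map val s) -(size_map (bitn m ^~ i)) nat_of_bits_lt. Qed.

Definition agree_outside (i k : nat) : bool :=
  [forall q : 'I_m, (q \notin s) ==> (qbit q i == qbit q k)].

Lemma agree_outsideP i k :
  reflect (forall q, (q < m)%N -> q \notin map val s -> bitn m q i = bitn m q k)
          (agree_outside i k).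
Proof.
apply: (iffP forallP) => [eq_out q lt_q q_out | eq_out q].
  apply/eqP/(implyP (eq_out (Ordinal lt_q))).
  by apply: contra q_out => q_in; apply/mapP; exists (Ordinal lt_q).
by apply/implyP => q_out; apply/eqP/eq_out; rewrite ?mem_map //; exact: val_inj.
Qed.

Lemma agree_outside_refl i : agree_outside i i.
Proof. exact/agree_outsideP. Qed.

Lemma agree_outside_sym i k : agree_outside i k = agree_outside k i.
Proof. by apply/agree_outsideP/agree_outsideP => eq_out q lt_q q_out; rewrite eq_out. Qed.

Lemma agree_outside_trans j i k :
  agree_outside i j -> agree_outside j k -> agree_outside i k.
Proof.
move=> /agree_outsideP eq_ij /agree_outsideP eq_jk.
by apply/agree_outsideP => q lt_q q_out; rewrite eq_ij ?eq_jk.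
Qed.

Definition splice (i l : nat) : nat :=
  nat_of_bits (mkseq (fun q => if q \in map val s
    then nth false (bits_of_nat (size s) l) (index q (map val s)) else bitn m q i) m).

Lemma splice_lt i l : (splice i l < 2 ^ m)%N.
Proof. by apply: leq_trans (nat_of_bits_lt _) _; rewrite size_mkseq. Qed.

Lemma bitn_splice i l q : (q < m)%N -> bitn m q (splice i l) =
  if q \in map val s then nth false (bits_of_nat (size s) l) (index q (map val s))
  else bitn m q i.
Proof.
move=> lt_q; rewrite /splice; set f := (fun q => _).
by have := @bitn_nat_of_bits (mkseq f m) q; rewrite size_mkseq nth_mkseq // => ->.
Qed.

Lemma agree_outside_splice i l : agree_outside i (splice i l).
Proof. by apply/agree_outsideP => q lt_q q_out; rewrite bitn_splice // (negbTE q_out). Qed.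

Lemma splice_agree_outside i j l : agree_outside i j -> splice i l = splice j l.
Proof.
move=> /agree_outsideP eq_out; apply: (bitn_inj (splice_lt _ _) (splice_lt _ _)) => q lt_q.
by rewrite !bitn_splice //; case: ifPn => // /(eq_out _ lt_q).
Qed.

Hypothesis s_uniq : uniq s.

Lemma loc_index_splice i l : (l < 2 ^ size s)%N -> loc_index s (splice i l) = l.
Proof.
move=> lt_l; have sv_uniq : uniq (map val s) by rewrite map_inj_uniq //; exact: val_inj.
rewrite loc_indexE -[RHS](bits_of_natK lt_l); congr nat_of_bits.
rewrite -[RHS](map_nth_index false sv_uniq); last by rewrite size_bits_of_nat size_map.
apply/eq_in_map => q q_in; rewrite bitn_splice ?q_in //.
by case/mapP: q_in => q' _ ->; exact: ltn_ord.
Qed.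

Lemma splice_loc_index i k :
  (k < 2 ^ m)%N -> agree_outside i k -> splice i (loc_index s k) = k.
Proof.
move=> lt_k /agree_outsideP eq_out; apply: bitn_inj (splice_lt _ _) lt_k _ => q lt_q.
rewrite bitn_splice //; case: ifPn => [q_in | /(eq_out _ lt_q) //].
rewrite loc_indexE -(size_map val s) -(size_map (bitn m ^~ k)) nat_of_bitsK.
by rewrite (nth_map 0%N) ?index_mem // nth_index.
Qed.

End Splice.

Local Open Scope sesquilinear_scope.

Lemma unitarymx1 d : (1%:M : 'M[algC]_d) \is unitarymx.
Proof. by apply/unitarymxP/matrixP => i j; rewrite mul1mx !mxE conjC_nat eq_sym. Qed.

Lemma entE p q (A : 'M[algC]_(p, q)) (i : 'I_p) (j : 'I_q) : ent A i j = A i j.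
Proof. by rewrite /ent !valK. Qed.

Lemma ent_Ordinal p q (A : 'M[algC]_(p, q)) a b (lt_a : (a < p)%N) (lt_b : (b < q)%N) :
  ent A a b = A (Ordinal lt_a) (Ordinal lt_b).
Proof. exact: (entE A (Ordinal lt_a) (Ordinal lt_b)). Qed.

Section Embed.
Variables (m : nat) (s : seq 'I_m).
Hypothesis s_uniq : uniq s.
Local Notation loc := (loc_index s).
Local Notation agree := (agree_outside s).
Local Notation loc_ord k := (Ordinal (loc_index_lt s k)).

Lemma embedE g (i k : 'I_(2 ^ m)) : embed s g i k = if agree i k then g (loc i) (loc k) else 0.
Proof. by rewrite mxE. Qed.

Lemma embed_ext g h : (forall a b, (a < 2 ^ size s)%N -> (b < 2 ^ size s)%N -> g a b = h a b) ->
  embed s g = embed s h.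
Proof. by move=> eq_gh; apply/matrixP => i k; rewrite !embedE eq_gh ?loc_index_lt. Qed.

Lemma ent_loc (G : 'M[algC]_(2 ^ size s)) i k : ent G (loc i) (loc k) = G (loc_ord i) (loc_ord k).
Proof. by rewrite -entE. Qed.

Lemma agree_outside_loc_inj (i k : 'I_(2 ^ m)) : agree i k -> loc i = loc k -> i = k.
Proof.
move=> agree_ik eq_loc; apply: val_inj => /=.
rewrite -(splice_loc_index (ltn_ord i) (agree_outside_refl s i)) eq_loc.
by rewrite (splice_agree_outside _ agree_ik) splice_loc_index ?agree_outside_refl.
Qed.

Lemma sum_agree_outside (F : nat -> algC) i :
  \sum_(k < 2 ^ m | agree i k) F (loc k) = \sum_(l < 2 ^ size s) F l.
Proof.
symmetry; rewrite (reindex_onto (fun k : 'I_(2 ^ m) => loc_ord k)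
                                (fun l : 'I_(2 ^ size s) => Ordinal (splice_lt s i l))) /=.
  apply: eq_bigl => k; rewrite -val_eqE /=.
  apply/eqP/idP => [<- | /(splice_loc_index (ltn_ord k)) //].
  exact: agree_outside_splice.
by move=> l _; apply: val_inj; rewrite /= loc_index_splice.
Qed.

Lemma embed1 : embed s (ent (1%:M : 'M[algC]_(2 ^ size s))) = 1%:M.
Proof.
apply/matrixP => i k; rewrite embedE ent_loc !mxE -[loc_ord i == _]val_eqE /=.
case: (boolP (agree i k)) => [agree_ik | not_agree].
  by congr ((_ : bool)%:R); apply/eqP/eqP => [/(agree_outside_loc_inj agree_ik) | ->].
by case: eqP not_agree => // ->; rewrite agree_outside_refl.
Qed.

Lemma embedM (G H : 'M[algC]_(2 ^ size s)) :
  embed s (ent G) *m embed s (ent H) = embed s (ent (G *m H)).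
Proof.
apply/matrixP => i j; rewrite !mxE -/(agree i j).
under eq_bigr do rewrite !embedE.
case: (boolP (agree i j)) => [agree_ij | not_agree]; last first.
  rewrite big1 // => k _; case: ifPn => [agree_ik | _]; last by rewrite mul0r.
  case: ifPn => [agree_kj | _]; last by rewrite mulr0.
  by case/negP: not_agree; exact: agree_outside_trans agree_kj.
rewrite (bigID (fun k : 'I_(2 ^ m) => agree i k)) /= [X in _ + X]big1 ?addr0; last first.
  by move=> k /negbTE ->; rewrite mul0r.
rewrite ent_loc mxE [RHS](eq_bigr (fun l : 'I__ => ent G (loc i) l * ent H l (loc j))); last first.
  by move=> l _; rewrite -(entE G) -(entE H).
rewrite -(sum_agree_outside (fun l => ent G (loc i) l * ent H l (loc j)) i).
apply: eq_bigr => k agree_ik; rewrite agree_ik ifT //.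
by rewrite agree_outside_sym in agree_ik; exact: agree_outside_trans agree_ij.
Qed.

Lemma embed_adj (G : 'M[algC]_(2 ^ size s)) : (embed s (ent G))^t* = embed s (ent (G^t*)).
Proof.
apply/matrixP => i k; rewrite !mxE -/(agree k i) -/(agree i k) agree_outside_sym.
by case: ifP; rewrite ?conjC0 // !ent_loc !mxE.
Qed.

Lemma embed_unitary (G : 'M[algC]_(2 ^ size s)) :
  G \is unitarymx -> embed s (ent G) \is unitarymx.
Proof.
by move=> /unitarymxP G_unitary; apply/unitarymxP; rewrite embed_adj embedM G_unitary embed1.
Qed.

Lemma embed_perm_row g pi (i k : 'I_(2 ^ m)) :
  (forall a, (a < 2 ^ size s)%N -> (pi a < 2 ^ size s)%N) ->
  (forall a b, (a < 2 ^ size s)%N -> (b < 2 ^ size s)%N -> g a b = (b == pi a)%:R) ->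
  embed s g i k = ((k : nat) == splice s i (pi (loc i)))%:R.
Proof.
move=> pi_lt g_perm; rewrite embedE; case: ifPn => [agree_ik | not_agree].
  rewrite g_perm ?loc_index_lt //; congr ((_ : bool)%:R); apply/eqP/eqP => [<- | ->].
    by rewrite splice_loc_index.
  by rewrite loc_index_splice // pi_lt // loc_index_lt.
by case: eqP not_agree => // ->; rewrite agree_outside_splice.
Qed.

End Embed.

Lemma embed_tr m (s : seq 'I_m) g : (forall a b, g a b = g b a) -> (embed s g)^T = embed s g.
Proof. by move=> g_sym; apply/matrixP => i k; rewrite mxE !embedE agree_outside_sym g_sym. Qed.

(** * Unitarity of circuits *)

Lemma mulmx_row_delta p q r (M : 'M[algC]_(p, q)) (R : 'M[algC]_(q, r)) a b c0
    (lt_c0 : (c0 < q)%N) :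
  (forall c : 'I_q, M a c = (c == c0 :> nat)%:R) -> (M *m R) a b = R (Ordinal lt_c0) b.
Proof.
move=> M_row; rewrite mxE (bigD1 (Ordinal lt_c0)) //= M_row eqxx mul1r big1 ?addr0 //.
by move=> c /negbTE ne_c; rewrite M_row -[_ == _]/(c == Ordinal lt_c0) ne_c mul0r.
Qed.

Lemma mulmx_col_delta p q r (M : 'M[algC]_(p, q)) (R : 'M[algC]_(q, r)) a b c0
    (lt_c0 : (c0 < q)%N) :
  (forall c : 'I_q, R c b = (c == c0 :> nat)%:R) -> (M *m R) a b = M a (Ordinal lt_c0).
Proof.
move=> R_col; rewrite mxE (bigD1 (Ordinal lt_c0)) //= R_col eqxx mulr1 big1 ?addr0 //.
by move=> c /negbTE ne_c; rewrite R_col -[_ == _]/(c == Ordinal lt_c0) ne_c mulr0.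
Qed.

Lemma sum_ent_unitary d (G : 'M[algC]_d) a b : G \is unitarymx -> (a < d)%N -> (b < d)%N ->
  \sum_(l < d) ent G a l * (ent G b l)^* = (a == b)%:R.
Proof.
move=> /unitarymxP G_unitary lt_a lt_b.
have := congr1 (fun M : 'M_d => M (Ordinal lt_a) (Ordinal lt_b)) G_unitary.
by rewrite !mxE => <-; apply: eq_bigr => l _; rewrite !mxE -!entE.
Qed.

Lemma sum_ord_exp2S (F : nat -> algC) k :
  \sum_(l < (2 ^ k.+1)%N) F l =
  \sum_(l < (2 ^ k)%N) F l + \sum_(l < (2 ^ k)%N) F (l + 2 ^ k)%N.
Proof.
rewrite expnS mul2n -addnn big_split_ord /=.
by congr (_ + _); apply: eq_bigr => l _; rewrite addnC.
Qed.

Section ControlledUnitary.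
Variables (n : nat) (U : 'M[algC]_(2 ^ n)).

Lemma ctrl_ent_lo a l : (l < 2 ^ n)%N ->
  ctrl_ent U a l = if (a < 2 ^ n)%N then ent (1%:M : 'M_(2 ^ n)) a l else 0.
Proof.
move=> lt_l; rewrite /ctrl_ent lt_l andbT [(2 ^ n <= l)%N]leqNgt lt_l andbF.
by case: ifPn => // lt_a; rewrite (ent_Ordinal _ lt_a lt_l) mxE.
Qed.

Lemma ctrl_ent_hi a l : (l < 2 ^ n)%N ->
  ctrl_ent U a (l + 2 ^ n)%N = if (a < 2 ^ n)%N then 0 else ent U (a - 2 ^ n) l.
Proof.
move=> lt_l; rewrite /ctrl_ent addnK [(l + _ < _)%N]ltnNge leq_addl andbF andbT.
by case: ltnP.
Qed.

(* Stated for any [k = n.+1] so that it applies to ['M_(2 ^ size s)] without a cast. *)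
Lemma ctrl_mx_unitary k : k = n.+1 -> U \is unitarymx ->
  (\matrix_(a, b) ctrl_ent U a b : 'M[algC]_(2 ^ k)) \is unitarymx.
Proof.
move=> -> U_unitary; apply/unitarymxP/matrixP => a b; rewrite !mxE.
under eq_bigr do rewrite !mxE.
rewrite (sum_ord_exp2S (fun l => ctrl_ent U a l * (ctrl_ent U b l)^*)).
under eq_bigr => l _ do rewrite !(ctrl_ent_lo _ (ltn_ord l)).
under [X in _ + X]eq_bigr => l _ do rewrite !(ctrl_ent_hi _ (ltn_ord l)).
have lt_a : (a < 2 * 2 ^ n)%N by rewrite -expnS.
have lt_b : (b < 2 * 2 ^ n)%N by rewrite -expnS.
case: (ltnP a (2 ^ n)%N) => [a_lo | a_hi]; case: (ltnP b (2 ^ n)%N) => [b_lo | b_hi].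
- rewrite [X in _ + X]big1 ?addr0 => [|l _]; last by rewrite conjC0 mulr0.
  by rewrite sum_ent_unitary ?unitarymx1.
- rewrite !big1 ?addr0 => [|l _|l _]; rewrite ?conjC0 ?mulr0 ?mul0r //.
  by rewrite (_ : a == b = false) //; apply: contraTF b_hi => /eqP <-; rewrite -ltnNge.
- rewrite !big1 ?addr0 => [|l _|l _]; rewrite ?conjC0 ?mulr0 ?mul0r //.
  by rewrite (_ : a == b = false) //; apply: contraTF b_lo => /eqP <-; rewrite -leqNgt.
rewrite big1 ?add0r => [|l _]; last by rewrite mul0r.
rewrite sum_ent_unitary //; try lia.
by congr ((_ : bool)%:R); apply/eqP/eqP => [eq_ab | -> //]; apply: ord_inj; lia.
Qed.

End ControlledUnitary.

Lemma gate_unitary n m (U : 'M[algC]_(2 ^ n)) (g : gate n m) :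
  U \is unitarymx -> gate_wf g -> uniq (gate_support g) -> gate_mx U g \is unitarymx.
Proof.
move=> U_unitary; case: g => [q G | q1 q2 G | c t] /= g_wf g_uniq.
- exact: (@embed_unitary _ [:: q]).
- by case: g_wf => _; exact: (@embed_unitary _ [:: q1; q2]).
set s := c :: _.
pose C : 'M[algC]_(2 ^ size s) := \matrix_(a, b) ctrl_ent U a b.
rewrite (@embed_ext _ _ _ (ent C)) => [|a b lt_a lt_b]; last first.
  by rewrite (ent_Ordinal _ lt_a lt_b) mxE.
by apply/embed_unitary/ctrl_mx_unitary; rewrite //= size_map size_enum_ord.
Qed.

Lemma layer_unitary n m (U : 'M[algC]_(2 ^ n)) (L : seq (gate n m)) :
  U \is unitarymx -> layer_wf L -> layer_mx U L \is unitarymx.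
Proof.
move=> U_unitary [L_wf L_uniq].
elim: L L_wf L_uniq => [_ _|g L IH [g_wf L_wf]]; first exact: unitarymx1.
rewrite /= cat_uniq => /and3P [g_uniq _ L_uniq].
by rewrite mul_unitarymx ?gate_unitary ?IH.
Qed.

Lemma circuit_unitary n m (U : 'M[algC]_(2 ^ n)) (C : circuit n m) :
  U \is unitarymx -> circuit_wf C -> circuit_mx U C \is unitarymx.
Proof.
rewrite /circuit_mx => U_unitary; move: (unitarymx1 (2 ^ m)).
elim: C 1%:M => [|L C IH] //= M M_unitary [L_wf C_wf].
by rewrite IH ?mul_unitarymx ?layer_unitary.
Qed.

(** * The block-encoding circuit *)

Definition Xmx : 'M[algC]_2 := \matrix_(a, b) (a != b :> nat)%:R.

(* On the 2-qubit basis |c t> (index 2c + t) CNOT swaps |10> and |11>. *)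
Definition cnot_index (a : nat) : nat := if (a < 2)%N then a else (5 - a)%N.
Definition CNOTmx : 'M[algC]_4 := \matrix_(a, b) ((b : nat) == cnot_index a)%:R.

Lemma Xmx_unitary : Xmx \is unitarymx.
Proof.
apply/unitarymxP/matrixP => i j; rewrite !mxE big_ord_recl big_ord1 !mxE.
by case: i => [[|[|?]] ?] //=; case: j => [[|[|?]] ?] //=;
  rewrite ?conjC0 ?conjC1 ?mulr0 ?mul0r ?mulr1 ?addr0 ?add0r.
Qed.

Lemma CNOTmx_unitary : CNOTmx \is unitarymx.
Proof.
apply/unitarymxP/matrixP => i j; rewrite !mxE !big_ord_recl big_ord0 !mxE /=.
by case: i => [[|[|[|[|?]]]] ?] //=; case: j => [[|[|[|[|?]]]] ?] //=;
  rewrite ?conjC0 ?conjC1 ?mulr0 ?mul0r ?mulr1 ?addr0 ?add0r.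
Qed.

Lemma ent_Xmx a b : (a < 2)%N -> (b < 2)%N -> ent Xmx a b = (b == (1 - a)%N)%:R.
Proof.
move=> lt_a lt_b; rewrite (ent_Ordinal _ lt_a lt_b) mxE /=.
by case: a lt_a => [|[|]] //; case: b lt_b => [|[|]].
Qed.

Lemma ent_Xmx_sym a b : ent Xmx a b = ent Xmx b a.
Proof. by rewrite /ent; do 2 case: insubP => //= *; rewrite !mxE eq_sym. Qed.

Lemma ent_CNOTmx a b : (a < 4)%N -> (b < 4)%N -> ent CNOTmx a b = (b == cnot_index a)%:R.
Proof. by move=> lt_a lt_b; rewrite (ent_Ordinal _ lt_a lt_b) mxE. Qed.

Lemma all_prop_map (T : eqType) (U : Type) (P : U -> Prop) (f : T -> U) (s : seq T) :
  (forall x, x \in s -> P (f x)) -> all_prop P (map f s).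
Proof.
elim: s => //= x s IH Pf; split; first by apply: Pf; rewrite mem_head.
by apply: IH => y y_in; apply: Pf; rewrite inE y_in orbT.
Qed.

Lemma CtrlU_wf n m (c : 'I_m) (t : 'I_n -> 'I_m) :
  uniq (gate_support (CtrlU c t)) -> gate_wf (CtrlU c t).
Proof. by move=> /= /andP [c_out t_uniq]; split; [exact/injectiveP | rewrite codomE]. Qed.

Lemma perm_flatten_pairs (T U : eqType) (f g : T -> U) (s : seq T) :
  perm_eq (flatten [seq [:: f x; g x] | x <- s]) (map f s ++ map g s).
Proof.
elim: s => //= x s IH; rewrite perm_cons.
apply: perm_trans (_ : perm_eq _ (g x :: (map f s ++ map g s))) _; first by rewrite perm_cons.
by rewrite -cat1s perm_catCA.
Qed.

Section DiagonalEncoding.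
Variable n : nat.
Local Notation m := (n + 3 + n)%N.

Lemma qubit_count_gt0 : (0 < m)%N.
Proof. lia. Qed.

Definition qubit (k : nat) : 'I_m := Ordinal (ltn_pmod k qubit_count_gt0).

Definition flip_flag : gate n m := Gate1 n (qubit 0) Xmx.
Definition ctrl_U_flag : gate n m := CtrlU (qubit 0) (fun k : 'I_n => qubit (3 + k)).
Definition copy_cnot (k : nat) : gate n m := Gate2 n (qubit (n + 3 + k)) (qubit (3 + k)) CNOTmx.
Definition copy_layer : seq (gate n m) := [seq copy_cnot k | k <- iota 0 n].

Definition diag_circuit : circuit n m :=
  [:: [:: flip_flag]; [:: ctrl_U_flag]; copy_layer; [:: flip_flag]].

Lemma support_ctrl_U_flag : map val (gate_support ctrl_U_flag) = 0%N :: iota 3 n.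
Proof.
rewrite /= mod0n (iotaDl 3 0) -val_enum_ord -!map_comp; congr (_ :: _).
by apply: eq_map => k /=; rewrite modn_small //; have := ltn_ord k; lia.
Qed.

Lemma support_copy_layer :
  map val (flatten [seq gate_support g | g <- copy_layer]) =
  flatten [seq [:: n + 3 + k; 3 + k]%N | k <- iota 0 n].
Proof.
rewrite map_flatten -!map_comp; congr flatten; apply/eq_in_map => k.
by rewrite mem_iota /= => lt_k; rewrite !modn_small //; lia.
Qed.

Lemma diag_circuit_wf : circuit_wf diag_circuit.
Proof.
have val_uniq (s : seq 'I_m) : uniq s = uniq (map val s).
  by rewrite map_inj_uniq //; exact: val_inj.
have flip_wf : layer_wf [:: flip_flag] by split => //=; split => //; exact: Xmx_unitary.
have ctrl_uniq : uniq (gate_support ctrl_U_flag).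
  by rewrite val_uniq support_ctrl_U_flag /= mem_iota iota_uniq.
have copy_uniq : uniq (flatten [seq gate_support g | g <- copy_layer]).
  rewrite val_uniq support_copy_layer (perm_uniq (perm_flatten_pairs _ _ _)).
  rewrite uniq_catC -(iotaDl 3 0) -(iotaDl (n + 3) 0) !addn0 [(n + 3)%N]addnC -iotaD.
  exact: iota_uniq.
have ctrl_wf : layer_wf [:: ctrl_U_flag].
  by split; [split=> //; exact: CtrlU_wf | rewrite /= cats0].
have copy_wf : layer_wf copy_layer.
  split=> //; apply: all_prop_map => k; rewrite mem_iota => lt_k.
  split; last exact: CNOTmx_unitary.
  by rewrite -val_eqE /= !modn_small //; lia.
by split; [|split; [|split; [|split]]].
Qed.

Lemma diag_circuit_depth : (1 <= n)%N -> (depth diag_circuit <= 4 * n)%N.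
Proof. by rewrite /depth /=; lia. Qed.

Lemma diag_circuit_queries : num_queries diag_circuit = 1%N.
Proof.
rewrite /num_queries !big_cons big_nil /=.
by rewrite (_ : count _ copy_layer = 0%N) //; rewrite /copy_layer; elim: (iota 0 n).
Qed.

Lemma diag_circuit_mx U : circuit_mx U diag_circuit =
  gate_mx U flip_flag *m (layer_mx U copy_layer *m (gate_mx U ctrl_U_flag *m gate_mx U flip_flag)).
Proof. by rewrite /circuit_mx /layer_mx /= !mulmx1. Qed.

Local Notation flag := [:: qubit 0].
Local Notation copy_support k := [:: qubit (n + 3 + k); qubit (3 + k)].

Definition flip_flag_index (i : nat) : nat := splice flag i (1 - loc_index flag i).

Definition copy_index (k i : nat) : nat :=
  splice (copy_support k) i (cnot_index (loc_index (copy_support k) i)).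

Definition copy_gates_index (ks : seq nat) (i : nat) : nat :=
  foldl (fun x k => copy_index k x) i ks.

Lemma bitn_flip_flag_index i q :
  (q < m)%N -> bitn m q (flip_flag_index i) = (q == 0%N) (+) bitn m q i.
Proof.
move=> lt_q; rewrite bitn_splice // /= mod0n inE.
case: eqP => [-> | _] //=; rewrite loc_indexE /= mod0n /nat_of_bits /=.
by case: (bitn m 0 i).
Qed.

Lemma bitn_copy_index k i q : (k < n)%N -> (q < m)%N ->
  bitn m q (copy_index k i) = bitn m q i (+) (q == 3 + k)%N && bitn m (n + 3 + k) i.
Proof.
move=> lt_k lt_q; rewrite bitn_splice // loc_indexE /= !modn_small; try lia.
have ne_sys : (3 + k == n + 3 + k)%N = false by apply/eqP; lia.
rewrite !inE; case: (q =P (n + 3 + k)%N) => [-> | _] /=.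
  rewrite eqxx eq_sym ne_sys /=.
  by case: (bitn m (n + 3 + k) i); case: (bitn m (3 + k) i).
case: (q =P (3 + k)%N) => [-> | _] /=; last by rewrite addbF.
rewrite eqxx eq_sym ne_sys /=.
by case: (bitn m (n + 3 + k) i); case: (bitn m (3 + k) i).
Qed.

Lemma flip_flag_row U (i c : 'I_(2 ^ m)) :
  gate_mx U flip_flag i c = (c == flip_flag_index i :> nat)%:R.
Proof.
apply: embed_perm_row => // [a /= lt_a | a b lt_a lt_b]; first lia.
exact: ent_Xmx.
Qed.

Lemma flip_flag_col U (i c : 'I_(2 ^ m)) :
  gate_mx U flip_flag c i = (c == flip_flag_index i :> nat)%:R.
Proof. by rewrite /= -(embed_tr _ ent_Xmx_sym) mxE; exact: flip_flag_row. Qed.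

Lemma copy_cnot_row U k (i : 'I_(2 ^ m)) : (k < n)%N -> forall c : 'I_(2 ^ m),
  gate_mx U (copy_cnot k) i c = (c == copy_index k i :> nat)%:R.
Proof.
move=> lt_k c; apply: embed_perm_row => [|a /= lt_a | a b lt_a lt_b]; last exact: ent_CNOTmx.
  by rewrite /= inE -val_eqE /= !modn_small //; lia.
by rewrite /cnot_index; case: ifP; lia.
Qed.

Lemma copy_gates_index_lt ks i : (i < 2 ^ m)%N -> (copy_gates_index ks i < 2 ^ m)%N.
Proof. by elim: ks i => //= k ks IH i _; apply/IH/splice_lt. Qed.

Lemma copy_gates_row U ks (i : 'I_(2 ^ m)) : all (fun k => k < n)%N ks -> forall c : 'I_(2 ^ m),
  layer_mx U [seq copy_cnot k | k <- ks] i c = (c == copy_gates_index ks i :> nat)%:R.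
Proof.
elim: ks i => [|k ks IH] i /=; first by move=> _ c; rewrite mxE eq_sym.
move=> /andP [lt_k lt_ks] c.
by rewrite (mulmx_row_delta _ _ (splice_lt _ _ _) (copy_cnot_row U i lt_k)) IH.
Qed.

Lemma bitn_copy_gates_index ks i q : uniq ks -> all (fun k => k < n)%N ks -> (q < m)%N ->
  bitn m q (copy_gates_index ks i) =
  bitn m q i (+) [&& 3 <= q, (q - 3)%N \in ks & bitn m (q + n) i]%N.
Proof.
elim: ks i => [|k ks IH] i /=; first by rewrite andbF addbF.
move=> /andP [k_notin ks_uniq] /andP [lt_k lt_ks] lt_q.
rewrite IH // (bitn_copy_index _ lt_k lt_q) inE.
case: (q =P (3 + k)%N) => [-> | ne_q].
  rewrite addKn eqxx (negbTE k_notin) leq_addr andbF addbF /=.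
  by rewrite (_ : 3 + k + n = n + 3 + k)%N //; lia.
rewrite andFb addbF; congr addb; case: (ltnP 2 q) => //= le3_q.
rewrite (_ : (q - 3 == k)%N = false) /=; last by apply/eqP; lia.
case: (boolP (q - 3 \in ks))%N => //= q_in.
have lt_q3 : (q - 3 < n)%N by move/allP: lt_ks => /(_ _ q_in).
rewrite bitn_copy_index //; last lia.
by rewrite (_ : (q + n == 3 + k)%N = false) ?addbF //; apply/eqP; lia.
Qed.

Lemma bitn_system_index j q : (j < 2 ^ n)%N -> (q < m)%N ->
  bitn m q j = (n + 3 <= q)%N && bitn n (q - (n + 3)) j.
Proof.
move=> lt_j lt_q; case: (ltnP q (n + 3)) => [lt_q3 | le_q] /=.
  by apply: bitn_small; apply: leq_trans lt_j _; rewrite leq_exp2l //; lia.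
by rewrite -{1}(subnKC le_q) bitn_addl.
Qed.

Lemma bitn_flipped_system_index j q : (j < 2 ^ n)%N -> (q < m)%N ->
  bitn m q (flip_flag_index j) = (q == 0%N) || (n + 3 <= q)%N && bitn n (q - (n + 3)) j.
Proof.
move=> lt_j lt_q; rewrite bitn_flip_flag_index // bitn_system_index //.
by case: eqP => [-> | _] //=; rewrite leqNgt addn_gt0 orbT.
Qed.

Lemma bitn_copied_system_index j q : (j < 2 ^ n)%N -> (q < m)%N ->
  bitn m q (copy_gates_index (iota 0 n) (flip_flag_index j)) =
  (q == 0%N) || (if (q < n + 3)%N then (3 <= q)%N && bitn n (q - 3) j
                 else bitn n (q - (n + 3)) j).
Proof.
move=> lt_j lt_q; rewrite bitn_copy_gates_index ?iota_uniq //; last first.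
  by apply/allP => k; rewrite mem_iota.
rewrite mem_iota bitn_flipped_system_index //.
case: (ltnP q (n + 3)) => [lt_q3 | le_q]; last first.
  rewrite (_ : q == 0 = false)%N; last by apply/eqP; lia.
  rewrite (_ : q - 3 < 0 + n = false)%N; last by apply/negbTE; rewrite ltnNge negbK; lia.
  by rewrite andbF /= andbF addbF.
rewrite andFb orbF.
case: (ltnP 2 q) => [lt2_q | le_q2] /=; last by rewrite addbF orbF.
rewrite bitn_flipped_system_index; try lia.
have -> : (q == 0%N) = false by apply/eqP; lia.
have -> : (q + n == 0)%N = false by apply/eqP; lia.
have -> : (q - 3 < 0 + n)%N = true by lia.
have -> : (n + 3 <= q + n)%N = true by lia.
by rewrite (_ : q + n - (n + 3) = q - 3)%N //; lia.
Qed.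

Lemma loc_index_ctrl_U_flag x : loc_index (gate_support ctrl_U_flag) x =
  (bitn m 0 x * 2 ^ n + nat_of_bits [seq bitn m (3 + k) x | k <- iota 0 n])%N.
Proof.
rewrite loc_indexE support_ctrl_U_flag /= nat_of_bits_cons size_map size_iota.
by rewrite (iotaDl 3 0) -map_comp.
Qed.

Lemma mem_support_ctrl_U_flag q :
  (q \in map val (gate_support ctrl_U_flag)) = (q == 0%N) || (3 <= q < n + 3)%N.
Proof. by rewrite support_ctrl_U_flag inE mem_iota addnC. Qed.

Lemma agree_outside_ctrl_U_flag i i' : (i < 2 ^ n)%N -> (i' < 2 ^ n)%N ->
  agree_outside (gate_support ctrl_U_flag)
    (copy_gates_index (iota 0 n) (flip_flag_index i)) (flip_flag_index i') = (i == i').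
Proof.
move=> lt_i lt_i'; apply/agree_outsideP/eqP => [eq_out | <- q lt_q].
  apply: (bitn_inj lt_i lt_i') => k lt_k; have lt_q : (n + 3 + k < m)%N by lia.
  move: (eq_out _ lt_q); rewrite mem_support_ctrl_U_flag.
  rewrite bitn_copied_system_index // bitn_flipped_system_index //.
  have -> : (n + 3 + k == 0)%N = false by apply/eqP; lia.
  have -> : (n + 3 + k < n + 3)%N = false by rewrite ltnNge leq_addr.
  by rewrite andbF leq_addr addKn => /(_ isT).
rewrite mem_support_ctrl_U_flag negb_or => /andP [/negbTE q_ne0 q_reg].
rewrite bitn_copied_system_index // bitn_flipped_system_index // q_ne0 /=.
case: ltnP => // lt_q3.
by move: q_reg; rewrite lt_q3 andbT => /negbTE ->.
Qed.

Lemma loc_index_ctrl_U_flag_copied i : (i < 2 ^ n)%N ->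
  loc_index (gate_support ctrl_U_flag) (copy_gates_index (iota 0 n) (flip_flag_index i)) =
  (2 ^ n + i)%N.
Proof.
move=> lt_i; rewrite loc_index_ctrl_U_flag (bitn_copied_system_index lt_i qubit_count_gt0).
rewrite (_ : [seq _ | k <- iota 0 n] = bits_of_nat n i) ?bits_of_natK ?mul1n //.
apply/eq_in_map => k; rewrite mem_iota => /andP [_ lt_k].
rewrite bitn_copied_system_index //; last lia.
have -> : (3 + k < n + 3)%N by lia.
by rewrite addKn leq_addr.
Qed.

Lemma loc_index_ctrl_U_flag_flipped i : (i < 2 ^ n)%N ->
  loc_index (gate_support ctrl_U_flag) (flip_flag_index i) = (2 ^ n)%N.
Proof.
move=> lt_i; rewrite loc_index_ctrl_U_flag (bitn_flipped_system_index lt_i qubit_count_gt0).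
rewrite (_ : [seq _ | k <- iota 0 n] = bits_of_nat n 0) ?bits_of_natK ?expn_gt0 ?mul1n ?addn0 //.
apply/eq_in_map => k; rewrite mem_iota => /andP [_ lt_k].
rewrite bitn_flipped_system_index //; last lia.
have -> : (n + 3 <= 3 + k)%N = false by apply/negbTE; rewrite -ltnNge; lia.
by rewrite /bitn div0n.
Qed.

Lemma diag_circuit_entry U (i i' : 'I_(2 ^ m)) : (i < 2 ^ n)%N -> (i' < 2 ^ n)%N ->
  circuit_mx U diag_circuit i i' = if i == i' then ent U i 0 else 0.
Proof.
move=> lt_i lt_i'.
have lt_r : (copy_gates_index (iota 0 n) (flip_flag_index i) < 2 ^ m)%N.
  exact/copy_gates_index_lt/splice_lt.
have all_lt : all (fun k => k < n)%N (iota 0 n) by apply/allP => k; rewrite mem_iota.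
rewrite diag_circuit_mx (mulmx_row_delta _ _ (splice_lt _ _ _) (flip_flag_row U i)).
rewrite (mulmx_row_delta _ _ lt_r (copy_gates_row U (Ordinal (splice_lt _ _ _)) all_lt)).
rewrite (mulmx_col_delta _ _ (splice_lt _ _ _) (flip_flag_col U i')).
rewrite [gate_mx _ _]/= embedE /= -/(flip_flag_index i') agree_outside_ctrl_U_flag //.
rewrite -val_eqE /=; case: eqP => [<- | //].
rewrite loc_index_ctrl_U_flag_copied // loc_index_ctrl_U_flag_flipped //.
by rewrite -[X in ctrl_ent _ _ X]add0n addnC ctrl_ent_hi ?expn_gt0 // ltnNge leq_addl /= addnK.
Qed.

End DiagonalEncoding.

Lemma opnorm_le0 p q : opnorm_le (0 : 'M[algC]_(p, q)) 0.
Proof.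
by move=> x; rewrite mul0mx mul0r /vnorm big1 ?sqrtC0 // => i _; rewrite mxE normr0 expr0n.
Qed.

Lemma exp2_le_addl a s : (2 ^ s <= 2 ^ (a + s))%N.
Proof. by rewrite leq_exp2l // leq_addl. Qed.

Lemma ket0_tens_id_block a s (M : 'M[algC]_(2 ^ (a + s))) (i j : 'I_(2 ^ s)) :
  (adj (ket0_tens_id a s) *m M *m ket0_tens_id a s) i j =
  M (widen_ord (exp2_le_addl a s) i) (widen_ord (exp2_le_addl a s) j).
Proof.
have lt_i : (i < 2 ^ (a + s))%N := leq_trans (ltn_ord i) (exp2_le_addl a s).
have lt_j : (j < 2 ^ (a + s))%N := leq_trans (ltn_ord j) (exp2_le_addl a s).
rewrite (mulmx_col_delta _ _ lt_j) => [|c]; last by rewrite mxE.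
rewrite (mulmx_row_delta _ _ lt_i) => [|c]; last by rewrite !mxE conjC_nat.
by congr (M _ _); apply: val_inj.
Qed.

Lemma diag_circuit_block n (U : 'M[algC]_(2 ^ n)) :
  adj (ket0_tens_id (n + 3) n) *m circuit_mx U (diag_circuit n) *m ket0_tens_id (n + 3) n =
  diag_of_state (U *m ket0 n).
Proof.
apply/matrixP => i j; rewrite ket0_tens_id_block diag_circuit_entry //=.
rewrite [RHS]mxE [X in X *+ _]mxE (mulmx_col_delta _ _ (expn_gt0 2 n)) => [|c]; last first.
  by rewrite mxE.
by rewrite -(entE U) (_ : (widen_ord _ i == widen_ord _ j) = (i == j)) //; case: (i == j).
Qed.

Theorem theorem2 :
  exists cd cq : nat,
  forall n : nat, (1 <= n)%N ->
  exists C : circuit n ((n + 3) + n)%N,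
    [/\ circuit_wf C,
        (depth C <= cd * n)%N,
        (num_queries C <= cq)%N &
        forall U : 'M[algC]_(2 ^ n), U \is unitarymx ->
          block_encoding n (n + 3)%N 1 0 (circuit_mx U C)
                         (diag_of_state (U *m ket0 n))].
Proof.
exists 4%N, 1%N => n n_gt0; exists (diag_circuit n); split.
- exact: diag_circuit_wf.
- exact: diag_circuit_depth.
- by rewrite diag_circuit_queries.
move=> U U_unitary; split; first exact: circuit_unitary (diag_circuit_wf n).
- exact: ler01.
- exact: lexx.
by rewrite scale1r diag_circuit_block subrr; exact: opnorm_le0.
Qed.
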